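(* For every integer $N\ge 0$, let $T_{2\times 3}(6,N)$ be the number of tilings of a $6\times N$ rectangle by $N$ tiles of size $2\times 3$. Then, as formal power series, \[ \sum_{N\ge 0} T_{2\times 3}(6,N)\,z^N=\frac{1}{1-z^2-z^3}. \]
   Context: A tiling of an $m\times n$ rectangle (width $m$, length $n$, made of $mn$ unit squares) by $a\times b$ tiles is a partition of the rectangle into non-overlapping axis-parallel $a\times b$ rectangles with integer corner coordinates, each placed in either of its two orientations. Tilings related by reflections or rotations of the rectangle are counted as distinct. The empty tiling counts once for $N=0$. *)

From mathcomp Require Import all_boot all_order all_algebra.
Unset Printing Implicit Defensive.
Import GRing.Theory Num.Theory.
Local Open Scope ring_scope.

(* Cells of an m x n rectangle: (i, j) with i < m (width), j < n (length). *)
Definition cell (m n : nat) := ('I_m * 'I_n)%type.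

Definition rect (m n x y w h : nat) : {set cell m n} :=
  [set c : cell m n | (x <= c.1 < x + w)%N && (y <= c.2 < y + h)%N].

Definition is_tile (m n a b : nat) (S : {set cell m n}) : bool :=
  [exists x : 'I_m.+1, exists y : 'I_n.+1,
     [&& (x + a <= m)%N, (y + b <= n)%N & S == rect m n x y a b]
  || [&& (x + b <= m)%N, (y + a <= n)%N & S == rect m n x y b a]].

Definition is_tiling (m n a b : nat) (P : {set {set cell m n}}) : bool :=
  partition P [set: cell m n] && [forall S in P, is_tile m n a b S].

Definition T (m n a b : nat) : nat := #|[set P | is_tiling m n a b P]|.

Definition fps := nat -> int.
Definition fps_mul (f g : fps) : fps :=
  fun k => (\sum_(i < k.+1) f i * g (k - i)%N)%R.
Definition fps_one : fps := fun k => ((k == 0%N) : nat)%:Z.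
Definition den_2x3 : fps :=
  fun k => (((k == 0%N) : nat)%:Z - ((k == 2%N) : nat)%:Z - ((k == 3%N) : nat)%:Z)%R.

From mathcomp Require Import all_boot all_order all_algebra zify.
Import GRing.Theory.

(** Scan the 6 x N rectangle from its bottom row.  The tile covering the
    corner cell starts a row of tiles that must be either two 3 x 2 tiles
    filling two rows or three 2 x 3 tiles filling three rows, and removing
    these forced tiles is a bijection onto the tilings of what is left.  So
    t(N) = t(N-2) + t(N-3) with t(0) = 1, t(1) = 0, t(2) = 1, which is the
    identity (1 - z^2 - z^3) * sum_N t(N) z^N = 1. *)

Ltac cells_lia := let c := fresh "c" in move=> c; rewrite !inE;
  move: (ltn_ord c.1) (ltn_ord c.2); move: (val c.1) (val c.2); lia.
Ltac set_lia := apply/setP; cells_lia.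
Ltac disjoint_lia := rewrite -setI_eq0; apply/eqP/setP; cells_lia.

Lemma coverD (I : finType) (P Q : {set {set I}}) :
  trivIset P -> Q \subset P -> cover (P :\: Q) = cover P :\: cover Q.
Proof.
move/trivIsetP=> tP /subsetP sQP; apply/setP=> x; rewrite inE.
apply/bigcupP/andP => [[A /setDP[AP ANQ] xA] | [xNQ /bigcupP[A AP xA]]].
  split; last by apply/bigcupP; exists A.
  apply/bigcupP=> -[B BQ xB]; have AB : A != B by apply: contraNneq ANQ => ->.
  by rewrite (disjointFr (tP _ _ AP (sQP _ BQ) AB) xA) in xB.
exists A => //; rewrite inE AP andbT; apply: contra xNQ => AQ.
by apply/bigcupP; exists A.
Qed.

Lemma partition_set1 (I : finType) (S : {set I}) : S != set0 -> partition [set S] S.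
Proof. by move=> S0; rewrite /partition cover1 trivIset1 eqxx inE eq_sym S0. Qed.

Section Tilings.

Variables m n a b : nat.

Definition tail y : {set cell m n} := [set c : cell m n | y <= c.2].

Definition tiling_of (D : {set cell m n}) (P : {set {set cell m n}}) :=
  partition P D && [forall S in P, is_tile m n a b S].

Definition tail_count y := #|[set P | tiling_of (tail y) P]|.

Definition tile_dims w h := (w = a /\ h = b) \/ (w = b /\ h = a).

Lemma is_tileP {S : {set cell m n}} : is_tile m n a b S -> exists x y w h,
  [/\ S = rect m n x y w h, tile_dims w h, x + w <= m & y + h <= n].
Proof.
case/existsP=> x /existsP[y /orP[/and3P[hx hy /eqP ->] | /and3P[hx hy /eqP ->]]].
  by exists x, y, a, b; split=> //; left.
by exists x, y, b, a; split=> //; right.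
Qed.

Lemma rect_is_tile x y w h :
  tile_dims w h -> x + w <= m -> y + h <= n -> is_tile m n a b (rect m n x y w h).
Proof.
move=> dims hx hy; have Hx : x < m.+1 by lia. have Hy : y < n.+1 by lia.
apply/existsP; exists (Ordinal Hx); apply/existsP; exists (Ordinal Hy) => /=.
by case: dims hx hy => -[-> ->] -> ->; rewrite eqxx ?orbT.
Qed.

Lemma rect_neq0 x y w h : x < m -> y < n -> 0 < w -> 0 < h -> rect m n x y w h != set0.
Proof.
move=> Hx Hy w0 h0; apply/set0Pn; exists ((Ordinal Hx, Ordinal Hy) : cell m n).
rewrite inE /=; lia.
Qed.

Lemma T_tail_count : T m n a b = tail_count 0.
Proof. by rewrite /T /tail_count (_ : tail 0 = setT) //; set_lia. Qed.

Lemma tail_count_end : tail_count n = 1.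
Proof.
rewrite /tail_count (_ : tail n = set0); last by set_lia.
rewrite -(cards1 (set0 : {set {set cell m n}})); apply: eq_card => P.
rewrite !inE /tiling_of partition_set0; apply/andP/eqP => [[/eqP //] | ->].
by split=> //; apply/forall_inP=> S; rewrite inE.
Qed.

(* The bijection is [Q |-> Ts :|: Q]. *)
Lemma card_tilings_forced (Ts : {set {set cell m n}}) (U D : {set cell m n}) :
    partition Ts U -> {in Ts, forall S, is_tile m n a b S} -> [disjoint U & D] ->
  #|[set P | tiling_of (U :|: D) P && (Ts \subset P)]| = #|[set Q | tiling_of D Q]|.
Proof.
move=> pTs tTs dUD.
have dQTs Q : tiling_of D Q -> [disjoint Q & Ts].
  case/andP=> pQ _; rewrite -setI_eq0; apply/eqP/setP=> S; rewrite !inE.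
  apply/negbTE/andP=> -[SQ STs]; move: (partition_neq0 pQ SQ).
  rewrite -subset0 -(disjoint_setI0 dUD) subsetI.
  by rewrite (partitionS pTs STs) (partitionS pQ SQ).
have dropTs Q : tiling_of D Q -> (Ts :|: Q) :\: Ts = Q.
  by move/dQTs=> dQ; rewrite setDUl setDv set0U; apply/setDidPl.
have -> : [set P | tiling_of (U :|: D) P && (Ts \subset P)] =
    (fun Q => Ts :|: Q) @: [set Q | tiling_of D Q].
  apply/setP=> P; rewrite inE; apply/andP/imsetP => [[/andP[pP tP] sTsP] | [Q]].
    exists (P :\: Ts); last by rewrite -{1}(setID P Ts) (setIidPr sTsP).
    rewrite inE /tiling_of /partition trivIsetD ?(partition_trivIset pP) //.
    rewrite coverD ?(partition_trivIset pP) // (cover_partition pP).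
    rewrite (cover_partition pTs) setDUl setDv set0U (setDidPl _) 1?disjoint_sym //.
    rewrite eqxx inE (partition0 pP) andbF /=.
    by apply/forall_inP=> S /setDP[SP _]; apply: (forall_inP tP).
  rewrite inE => /andP[pQ tQ] ->; split; last exact: subsetUl.
  apply/andP; split; last first.
    by apply/forall_inP=> S /setUP[/tTs | /(forall_inP tQ)].
  have coverTsQ : cover (Ts :|: Q) = U :|: D.
    by rewrite /cover bigcup_setU -/(cover Ts) -/(cover Q) (cover_partition pTs)
      (cover_partition pQ).
  rewrite /partition coverTsQ eqxx inE negb_or (partition0 pQ) (partition0 pTs) andbT /=.
  apply: trivIsetU; rewrite ?(partition_trivIset pTs) ?(partition_trivIset pQ) //.
  by rewrite (cover_partition pTs) (cover_partition pQ).
rewrite card_in_imset // => Q1 Q2; rewrite !inE => tQ1 tQ2 E.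
by rewrite -(dropTs _ tQ1) E dropTs.
Qed.

Lemma card_tilings_tail_forced (Ts : {set {set cell m n}}) y h :
    partition Ts (rect m n 0 y m h) -> {in Ts, forall S, is_tile m n a b S} ->
  #|[set P | tiling_of (tail y) P && (Ts \subset P)]| = tail_count (y + h).
Proof.
move=> pTs tTs.
rewrite (_ : tail y = rect m n 0 y m h :|: tail (y + h)); last by set_lia.
by apply: card_tilings_forced => //; disjoint_lia.
Qed.

Lemma same_tile_in_row {y} {P : {set {set cell m n}}} {x1 w1 h1 x2 w2 h2} i :
    tiling_of (tail y) P -> y < n ->
    rect m n x1 y w1 h1 \in P -> rect m n x2 y w2 h2 \in P ->
    x1 <= i < x1 + w1 -> x2 <= i < x2 + w2 -> 0 < h1 -> 0 < h2 ->
    x1 + w1 <= m -> x2 + w2 <= m ->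
  x1 = x2 /\ w1 = w2.
Proof.
move=> /andP[pP _] Hy R1 R2 i1 i2 h1_gt0 h2_gt0 b1 b2; have Hi : i < m by lia.
have c1 : ((Ordinal Hi, Ordinal Hy) : cell m n) \in rect m n x1 y w1 h1.
  by rewrite inE /=; lia.
have c2 : ((Ordinal Hi, Ordinal Hy) : cell m n) \in rect m n x2 y w2 h2.
  by rewrite inE /=; lia.
have E : rect m n x1 y w1 h1 = rect m n x2 y w2 h2.
  apply/eqP; apply: contraT => ne.
  have /trivIsetP tP := partition_trivIset pP.
  by rewrite (disjointFr (tP _ _ R1 R2 ne) c1) in c2.
have row j (Hj : j < m) : (x1 <= j < x1 + w1) = (x2 <= j < x2 + w2).
  by move/setP/(_ (Ordinal Hj, Ordinal Hy)): E; rewrite !inE /=; lia.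
have := row x1; have := row x2; have := row (x1 + w1).-1; have := row (x2 + w2).-1.
lia.
Qed.

Lemma tile_at_row {y} {P : {set {set cell m n}}} i :
    tiling_of (tail y) P -> i < m -> y < n ->
  exists x w h, [/\ rect m n x y w h \in P, x <= i < x + w, tile_dims w h,
                    x + w <= m & y + h <= n].
Proof.
move=> /andP[pP tP] Hi Hy.
have : ((Ordinal Hi, Ordinal Hy) : cell m n) \in cover P.
  by rewrite (cover_partition pP) inE.
case/bigcupP=> S SP cS.
have [x [y' [w [h [defS dims hx hy]]]]] := is_tileP (forall_inP tP S SP).
move: cS; rewrite defS inE /= => cS.
have Hx : x < m by lia. have Hy' : y' < n by lia.
have : ((Ordinal Hx, Ordinal Hy') : cell m n) \in tail y.
  by apply: (subsetP (partitionS pP SP)); rewrite defS inE /=; lia.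
rewrite inE /= => le_yy'; have ey : y' = y by lia.
by exists x, w, h; split; rewrite -?ey -?defS //; lia.
Qed.

Hypotheses (a_gt0 : 0 < a) (b_gt0 : 0 < b).

Lemma next_tile_in_row {y} {P : {set {set cell m n}}} :
    tiling_of (tail y) P -> y < n -> forall x w h,
    rect m n x y w h \in P -> tile_dims w h -> x + w < m ->
  exists w' h', [/\ rect m n (x + w) y w' h' \in P, tile_dims w' h',
                    x + w + w' <= m & y + h' <= n].
Proof.
move=> tP Hy x w h R dims lt_xw_m.
have [x' [w' [h' [R' cov' dims' hx' hy']]]] := tile_at_row (x + w) tP lt_xw_m Hy.
suff ex' : x' = x + w by exists w', h'; rewrite -ex'.
have [lt_x'|] := ltnP x' (x + w); last by lia.
move: (same_tile_in_row (x + w).-1 tP Hy R R') dims dims'; rewrite /tile_dims; lia.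
Qed.

End Tilings.

Arguments is_tileP {m n a b S}.
Arguments same_tile_in_row {m n a b y P x1 w1 h1 x2 w2 h2} i.
Arguments tile_at_row {m n a b y P} i.
Arguments next_tile_in_row {m n a b} a_gt0 b_gt0 {y P}.

Section SixWide.

Variable n : nat.

Local Notation tiling y := (tiling_of 6 n 2 3 (tail 6 n y)).
Local Notation tail_count := (tail_count 6 n 2 3).

Definition band2 y : {set {set cell 6 n}} := [set rect 6 n 0 y 3 2; rect 6 n 3 y 3 2].
Definition band3 y : {set {set cell 6 n}} :=
  [set rect 6 n 0 y 2 3; rect 6 n 2 y 2 3; rect 6 n 4 y 2 3].

Lemma tiling_bands {y} {P : {set {set cell 6 n}}} : tiling y P -> y < n ->
  (band2 y \subset P /\ y + 2 <= n) \/ (band3 y \subset P /\ y + 3 <= n).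
Proof.
move=> tP Hy; rewrite !subUset !sub1set.
have next := next_tile_in_row (a := 2) (b := 3) isT isT tP Hy.
have [x [w [h [R0 /andP[x0 _] dims _ hy]]]] := tile_at_row 0 tP isT Hy.
move: x0 R0; rewrite leqn0 => /eqP -> R0.
have upright : tile_dims 2 3 2 3 by left.
have flat : tile_dims 2 3 3 2 by right.
case: dims hy R0 => -[-> ->] hy R0.
- have [w1 [h1 [R1 dims1 b1 _]]] := next _ _ _ R0 upright isT.
  case: dims1 b1 R1 => -[-> ->] b1 R1.
  + have [w2 [h2 [R2 dims2 b2 _]]] := next _ _ _ R1 upright isT.
    case: dims2 b2 R2 => -[-> ->] b2 R2 //.
    by right; rewrite R0 R1 R2.
  + have [w2 [h2 [_ dims2 b2 _]]] := next _ _ _ R1 flat isT.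
    by move: dims2 b2; rewrite /tile_dims; lia.
- have [w1 [h1 [R1 dims1 b1 _]]] := next _ _ _ R0 flat isT.
  case: dims1 b1 R1 => -[-> ->] b1 R1.
  + have [w2 [h2 [_ dims2 b2 _]]] := next _ _ _ R1 upright isT.
    by move: dims2 b2; rewrite /tile_dims; lia.
  + by left; rewrite R0 R1.
Qed.

Lemma bands_exclusive {y} {P : {set {set cell 6 n}}} : tiling y P -> y < n ->
  band2 y \subset P -> band3 y \subset P -> False.
Proof.
move=> tP Hy; rewrite !subUset !sub1set => /andP[A1 _] /andP[/andP[B1 _] _].
by have [_] := same_tile_in_row 0 tP Hy A1 B1 isT isT isT isT isT isT.
Qed.

Lemma card_band2_tilings y : y + 2 <= n ->
  #|[set P | tiling y P && (band2 y \subset P)]| = tail_count (y + 2).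
Proof.
move=> Hy; apply: card_tilings_tail_forced.
  rewrite (_ : rect 6 n 0 y 6 2 = rect 6 n 0 y 3 2 :|: rect 6 n 3 y 3 2); last by set_lia.
  apply: partitionU1; first apply: partition_set1.
  - by apply: rect_neq0 => //; lia.
  - by apply: rect_neq0 => //; lia.
  - by disjoint_lia.
by move=> S /set2P[] ->; apply: rect_is_tile => //; right.
Qed.

Lemma card_band3_tilings y : y + 3 <= n ->
  #|[set P | tiling y P && (band3 y \subset P)]| = tail_count (y + 3).
Proof.
move=> Hy; rewrite /band3 -setUA; apply: card_tilings_tail_forced.
  rewrite (_ : rect 6 n 0 y 6 3 =
     rect 6 n 0 y 2 3 :|: (rect 6 n 2 y 2 3 :|: rect 6 n 4 y 2 3)); last by set_lia.
  apply: partitionU1; first apply: partitionU1; first apply: partition_set1.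
  - by apply: rect_neq0 => //; lia.
  - by apply: rect_neq0 => //; lia.
  - by disjoint_lia.
  - by apply: rect_neq0 => //; lia.
  - by disjoint_lia.
by move=> S /setU1P[|/set2P[]] ->; apply: rect_is_tile => //; left.
Qed.

Lemma tail_count_rec y : y < n ->
  tail_count y = (if y + 2 <= n then tail_count (y + 2) else 0) +
                 (if y + 3 <= n then tail_count (y + 3) else 0).
Proof.
move=> Hy; rewrite {1}/tail_count.
rewrite -(cardsID [set P : {set {set cell 6 n}} | band2 y \subset P]); congr (_ + _).
  case: ifP => Hy2.
    by rewrite -card_band2_tilings //; apply: eq_card => P; rewrite !inE.
  apply/eqP; rewrite cards_eq0; apply/eqP/setP => P; rewrite !inE.
  apply/negbTE/andP => -[tP b2].
  case: (tiling_bands tP Hy) => [[_] | [b3 _]]; first by lia.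
  exact: bands_exclusive tP Hy b2 b3.
case: ifP => Hy3.
  rewrite -card_band3_tilings //; apply: eq_card => P; rewrite !inE.
  apply/andP/andP => [[nb2 tP] | [tP b3]]; split=> //.
    by case: (tiling_bands tP Hy) => -[b] //; rewrite b in nb2.
  by apply/negP => b2; exact: bands_exclusive tP Hy b2 b3.
apply/eqP; rewrite cards_eq0; apply/eqP/setP => P; rewrite !inE.
apply/negbTE/andP => -[nb2 tP].
by case: (tiling_bands tP Hy) => -[b]; [rewrite b in nb2 | lia].
Qed.

End SixWide.

Fixpoint inv_den_2x3 k :=
  match k with
  | 0 | 2 => 1
  | 1 => 0
  | (k'.+1 as k1).+2 => inv_den_2x3 k1 + inv_den_2x3 k'
  end.

Lemma inv_den_2x3_rec k : 0 < k ->
  inv_den_2x3 k = (if 2 <= k then inv_den_2x3 (k - 2) else 0) +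
                  (if 3 <= k then inv_den_2x3 (k - 3) else 0).
Proof. by case: k => [|[|[|k]]] //= _; rewrite !subSS subn0. Qed.

Lemma tail_count_eq n y : y <= n -> tail_count 6 n 2 3 y = inv_den_2x3 (n - y).
Proof.
move Ek: (n - y) => k; elim/ltn_ind: k y Ek => k IH y Ek le_yn.
have [lt_yn | ge_yn] := ltnP y n; last first.
  by rewrite (_ : y = n) 1?(_ : k = 0) ?tail_count_end //; lia.
rewrite tail_count_rec // inv_den_2x3_rec; last by lia.
rewrite (_ : (y + 2 <= n) = (2 <= k)); last by lia.
rewrite (_ : (y + 3 <= n) = (3 <= k)); last by lia.
by congr (_ + _); case: ifP => // le_k; apply: IH; lia.
Qed.

Lemma T_6_2x3 N : T 6 N 2 3 = inv_den_2x3 N.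
Proof. by rewrite T_tail_count tail_count_eq ?subn0. Qed.

Local Open Scope ring_scope.

Lemma sum_indicator_mul (F : nat -> int) j k :
  \sum_(i < k.+1) ((i == j :> nat) : nat)%:Z * F i = if (j <= k)%N then F j else 0.
Proof.
rewrite -ltnS -(big_ord1_eq +%R F) [RHS]big_mkcond; apply: eq_bigr => i _.
by case: (_ == _); [exact: mul1r | exact: mul0r].
Qed.

Lemma fps_mul_den_2x3_eq_one (u : fps) :
    u 0%N = 1 -> u 1%N = 0 -> u 2%N = 1 -> (forall k, u k.+3 = u k.+1 + u k) ->
  forall k, fps_mul den_2x3 u k = fps_one k.
Proof.
move=> u0 u1 u2 urec k; rewrite /fps_mul /den_2x3 /fps_one.
under eq_bigr => i _ do rewrite !mulrBl.
rewrite !sumrB !(sum_indicator_mul (fun i => u (k - i)%N)).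
case: k => [|[|[|k]]] /=; rewrite ?subn0 ?subnn ?u0 ?u1 ?u2 ?subrr ?subr0 //.
by rewrite !subSS !subn0 urec addrAC addrK subrr.
Qed.

Theorem mainTheorem9 :
  forall k : nat,
    fps_mul den_2x3 (fun N => (T 6 N 2 3)%:Z) k = fps_one k.
Proof.
apply: fps_mul_den_2x3_eq_one; rewrite ?T_6_2x3 // => k.
by rewrite !T_6_2x3 PoszD.
Qed.
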